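(* Let $k\ge4$ be an integer, $\eta\in[\eta_{k+1},\eta_k)$, and $j\ge k$ an integer. Then $\Psi_j(\eta)>0$, where $\Psi_j(\eta)=\sin\eta+|a|^{j-2}\sin((j+1)\eta)$.
   Context: For $\eta\in(0,\pi/3)$ let $|a|=\frac{1}{2\cos\eta}$. For integers $k\ge1$ let $\Phi_k(\eta)=(1-|a|^4)\sin((k-1)\eta)-|a|^3\sin((k-2)\eta)+|a|^k\sin\eta$. For each integer $k\ge4$, $\Phi_k$ has a unique zero in $(\pi/k,\pi/(k-1))$, denoted $\eta_k$. *)

From Stdlib Require Import Reals.
Open Scope R_scope.

Definition absa (eta : R) : R := 1 / (2 * cos eta).

Definition Phi (k : nat) (eta : R) : R :=
  (1 - absa eta ^ 4) * sin ((INR k - 1) * eta)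
  - absa eta ^ 3 * sin ((INR k - 2) * eta)
  + absa eta ^ k * sin eta.

(* eta_k is characterised as the (unique, by the paper) zero of Phi_k in (pi/k, pi/(k-1)) *)
Definition is_eta_k (k : nat) (x : R) : Prop :=
  PI / INR k < x < PI / (INR k - 1) /\ Phi k x = 0.

Definition Psi (j : nat) (eta : R) : R :=
  sin eta + absa eta ^ (j - 2) * sin ((INR j + 1) * eta).

From Stdlib Require Import Reals Lra Lia Psatz.
Open Scope R_scope.

(* Since pi/(k+1) < eta < pi/(k-1) <= pi/3, cos eta > 1/2, hence 0 < |a| < 1 and
   sin eta > 0.  For j = 4, 5 the multiple-angle formulas write Psi_j(eta) as
   sin eta * q(cos eta) / (4 cos^2 eta) with q > 0.  For j >= 6 it suffices that
   |a|^m < sin eta for some m <= j - 2.  If k <= 5 take m = 4: sin eta > 1/2, and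
   |a|^4 < 1/2, for k = 5 because eta < pi/4, for k = 4 because Phi_4(eta_4) = 0
   forces 16 cos^4 eta_4 = 2 while eta < eta_4.  If k >= 6 take m = k - 2: from
   |a|^2 < 1/2 we get (k+1) |a|^(k-2) <= 7 |a|^4 < 7/4, whereas
   (k+1) sin eta >= 5/6 (k+1) eta > 5 pi/6. *)

Lemma sin_3a x : sin (3 * x) = sin x * (4 * cos x ^ 2 - 1).
Proof.
  replace (3 * x) with (2 * x + x) by ring.
  rewrite sin_plus, sin_2a, cos_2a_cos; ring.
Qed.

Lemma cos_3a x : cos (3 * x) = 4 * cos x ^ 3 - 3 * cos x.
Proof.
  replace (3 * x) with (2 * x + x) by ring.
  rewrite cos_plus, sin_2a, cos_2a_cos.
  replace (2 * sin x * cos x * sin x) with (2 * cos x * (sin x * sin x)) by ring.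
  rewrite <- Rsqr_def, sin2; unfold Rsqr; ring.
Qed.

Lemma sin_5a x : sin (5 * x) = sin x * (16 * cos x ^ 4 - 12 * cos x ^ 2 + 1).
Proof.
  replace (5 * x) with (3 * x + 2 * x) by ring.
  rewrite sin_plus, sin_3a, cos_3a, sin_2a, cos_2a_cos; ring.
Qed.

Lemma sin_6a x : sin (6 * x) = 2 * sin x * (4 * cos x ^ 2 - 1) * (4 * cos x ^ 3 - 3 * cos x).
Proof.
  replace (6 * x) with (3 * x + 3 * x) by ring.
  rewrite sin_plus, sin_3a, cos_3a; ring.
Qed.

Lemma sin_ge_cubic x : 0 <= x <= PI -> x - x ^ 3 / 6 <= sin x.
Proof.
  intros [H0 HPI].
  destruct (sin_bound x 0 H0 HPI) as [Hlb _].
  unfold sin_approx, sin_term in Hlb; simpl in Hlb.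
  lra.
Qed.

Lemma sin_gt_half x : PI / 6 < x <= PI / 2 -> 1 / 2 < sin x.
Proof.
  intros Hx; rewrite <- sin_PI6.
  pose proof PI_RGT_0.
  apply sin_increasing_1; lra.
Qed.

Lemma cos_gt_half x : 0 <= x < PI / 3 -> 1 / 2 < cos x.
Proof.
  intros Hx; rewrite <- cos_PI3.
  pose proof PI_RGT_0.
  apply cos_decreasing_1; lra.
Qed.

Lemma cos_sqr_gt_half x : 0 <= x < PI / 4 -> 1 / 2 < cos x ^ 2.
Proof.
  intros Hx.
  assert (H2x : 0 < cos (2 * x)) by (apply cos_gt_0; lra).
  rewrite cos_2a_cos in H2x; nra.
Qed.

Lemma Rle_pow_le_1 x m n : 0 <= x <= 1 -> (m <= n)%nat -> x ^ n <= x ^ m.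
Proof.
  intros Hx Hmn.
  replace n with (m + (n - m))%nat by lia; rewrite pow_add.
  assert (0 <= x ^ m) by (apply pow_le; lra).
  assert (x ^ (n - m) <= 1) by (rewrite <- (pow1 (n - m)); apply pow_incr; lra).
  nra.
Qed.

Lemma pow_mul_affine_le x c : 0 <= x -> 0 <= c -> x * (c + 1) <= c ->
  forall n, x ^ n * (c + INR n) <= c.
Proof.
  intros Hx Hc Hxc n; induction n as [|n IH]; [simpl; lra|].
  rewrite S_INR; simpl pow.
  assert (0 <= x ^ n) by (apply pow_le; lra).
  assert (x <= 1) by nra.
  assert (x * (c + INR n + 1) <= c + INR n) by (pose proof (pos_INR n); nra).
  nra.
Qed.

Lemma absa_mul_2cos x : cos x <> 0 -> absa x * (2 * cos x) = 1.
Proof. intros Hc; unfold absa; field; exact Hc. Qed.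

Lemma absa_bounds x : 1 / 2 < cos x -> 0 < absa x < 1.
Proof. intros Hc; pose proof (absa_mul_2cos x ltac:(lra)); split; nra. Qed.

Lemma absa_pow_mul_2cos x n : cos x <> 0 -> absa x ^ n * (2 * cos x) ^ n = 1.
Proof. intros Hc; rewrite <- Rpow_mult_distr, (absa_mul_2cos x Hc); apply pow1. Qed.

Lemma absa_sqr_lt_half x : 0 <= x < PI / 4 -> absa x ^ 2 < 1 / 2.
Proof.
  intros Hx.
  pose proof (cos_sqr_gt_half x Hx) as Hc2.
  assert (Hc : cos x <> 0) by (intros E; rewrite E in Hc2; lra).
  pose proof (absa_pow_mul_2cos x 2 Hc) as E.
  nra.
Qed.

Lemma Phi_4_eq0_cos4 x : 0 < sin x -> 1 / 2 < cos x -> Phi 4 x = 0 -> 16 * cos x ^ 4 = 2.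
Proof.
  intros Hs Hc H; unfold Phi, absa in H.
  replace ((INR 4 - 1) * x) with (3 * x) in H by (simpl; ring).
  replace ((INR 4 - 2) * x) with (2 * x) in H by (simpl; ring).
  rewrite sin_3a, sin_2a in H.
  assert (E : sin x * (4 * cos x ^ 2 - 1) * (16 * cos x ^ 4 - 2) = 0).
  { rewrite <- (Rmult_0_r (16 * cos x ^ 4)), <- H; field; lra. }
  apply Rmult_integral in E as [E | E]; [|lra].
  apply Rmult_integral in E as [E | E]; nra.
Qed.

Lemma absa_pow4_lt_half_of_lt_eta4 etak x :
  is_eta_k 4 etak -> 0 <= x < etak -> absa x ^ 4 < 1 / 2.
Proof.
  intros [[Hlo Hhi] HPhi] Hx.
  replace (INR 4 - 1) with 3 in Hhi by (simpl; ring).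
  pose proof PI_RGT_0.
  assert (Hck : 1 / 2 < cos etak) by (apply cos_gt_half; lra).
  assert (Hsk : 0 < sin etak) by (apply sin_gt_0; lra).
  pose proof (Phi_4_eq0_cos4 etak Hsk Hck HPhi) as Hcos4.
  assert (Hcx : cos etak < cos x) by (apply cos_decreasing_1; lra).
  assert (H2 : cos etak ^ 2 < cos x ^ 2) by nra.
  assert (H4 : cos etak ^ 4 < cos x ^ 4) by nra.
  pose proof (absa_pow_mul_2cos x 4 ltac:(lra)) as E.
  nra.
Qed.

Lemma Psi_gt0_of_pow_lt_sin j m x : 0 < absa x < 1 -> (m <= j - 2)%nat ->
  absa x ^ m < sin x -> Psi j x > 0.
Proof.
  intros Ha Hm H; unfold Psi.
  pose proof (SIN_bound ((INR j + 1) * x)).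
  pose proof (Rle_pow_le_1 (absa x) m (j - 2) ltac:(lra) Hm).
  assert (0 < absa x ^ (j - 2)) by (apply pow_lt; lra).
  nra.
Qed.

Lemma Psi_4_gt0 x : 0 < sin x -> 1 / 2 < cos x -> Psi 4 x > 0.
Proof.
  intros Hs Hc; unfold Psi, absa; simpl (4 - 2)%nat.
  replace ((INR 4 + 1) * x) with (5 * x) by (simpl; ring).
  rewrite sin_5a.
  replace (sin x + (1 / (2 * cos x)) ^ 2 * (sin x * (16 * cos x ^ 4 - 12 * cos x ^ 2 + 1)))
    with (sin x * (4 * cos x ^ 2 - 1) ^ 2 / (4 * cos x ^ 2)) by (field; lra).
  apply Rdiv_lt_0_compat; [apply Rmult_lt_0_compat; [lra | apply pow_lt] |]; nra.
Qed.

Lemma Psi_5_gt0 x : 0 < sin x -> 0 < cos x -> Psi 5 x > 0.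
Proof.
  intros Hs Hc; unfold Psi, absa; simpl (5 - 2)%nat.
  replace ((INR 5 + 1) * x) with (6 * x) by (simpl; ring).
  rewrite sin_6a.
  replace (sin x + (1 / (2 * cos x)) ^ 3
                   * (2 * sin x * (4 * cos x ^ 2 - 1) * (4 * cos x ^ 3 - 3 * cos x)))
    with (sin x * ((4 * cos x ^ 2 - 3 / 2) ^ 2 + 3 / 4) / (4 * cos x ^ 2)) by (field; lra).
  pose proof (pow2_ge_0 (4 * cos x ^ 2 - 3 / 2)).
  apply Rdiv_lt_0_compat; [apply Rmult_lt_0_compat |]; nra.
Qed.

Lemma eta_window k etak etak1 eta : (2 <= k)%nat ->
  is_eta_k k etak -> is_eta_k (S k) etak1 -> etak1 <= eta < etak ->
  PI < (INR k + 1) * eta /\ (INR k - 1) * eta < PI.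
Proof.
  intros Hk [[_ Hhi] _] [[Hlo _] _] Heta.
  rewrite S_INR in Hlo.
  assert (HK : 2 <= INR k) by (apply (le_INR 2); exact Hk).
  assert (E1 : PI / (INR k + 1) * (INR k + 1) = PI) by (field; lra).
  assert (E2 : PI / (INR k - 1) * (INR k - 1) = PI) by (field; lra).
  split; nra.
Qed.

Lemma absa_pow_lt_sin_of_window k x : (6 <= k)%nat ->
  PI < (INR k + 1) * x -> (INR k - 1) * x < PI -> absa x ^ (k - 2) < sin x.
Proof.
  intros Hk Hlo Hhi.
  pose proof PI_RGT_0; pose proof PI2_3_2; pose proof PI_4.
  assert (HK : INR 6 <= INR k) by (apply le_INR; exact Hk).
  replace (INR 6) with 6 in HK by (simpl; ring).
  assert (Hx : 0 < x < PI / 5) by (split; nra).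
  assert (Ha2 : absa x ^ 2 < 1 / 2) by (apply absa_sqr_lt_half; lra).
  assert (Hc : 1 / 2 < cos x) by (apply cos_gt_half; lra).
  pose proof (absa_bounds x Hc) as Ha.
  assert (Hpow : absa x ^ (k - 6) * (INR k + 1) <= 7).
  { pose proof (pow_mul_affine_le (absa x) 7 ltac:(lra) ltac:(lra) ltac:(nra) (k - 6)) as Hgeom.
    rewrite minus_INR in Hgeom by exact Hk.
    replace (7 + (INR k - INR 6)) with (INR k + 1) in Hgeom by (simpl; ring).
    exact Hgeom. }
  assert (Ha4 : absa x ^ 4 < 1 / 4) by nra.
  assert (Hsin : 5 / 6 * x <= sin x) by (pose proof (sin_ge_cubic x ltac:(lra)); nra).
  replace (k - 2)%nat with (4 + (k - 6))%nat by lia; rewrite pow_add.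
  assert (0 <= absa x ^ (k - 6)) by (apply pow_le; lra).
  assert (0 <= absa x ^ 4) by (apply pow_le; lra).
  nra.
Qed.

Lemma absa_pow4_lt_sin_of_window k etak x : (4 <= k <= 5)%nat ->
  is_eta_k k etak -> x < etak -> PI < (INR k + 1) * x -> absa x ^ 4 < sin x.
Proof.
  intros Hk Hetak Hhi Hlo.
  pose proof PI_RGT_0.
  assert (Hsin : PI / 6 < x < PI / 3 -> 1 / 2 < sin x)
    by (intros; apply sin_gt_half; lra).
  enough (PI / 6 < x < PI / 3 /\ absa x ^ 4 < 1 / 2) by lra.
  pose proof Hetak as [[_ Hetak_hi] _].
  assert (k = 4%nat \/ k = 5%nat) as [-> | ->] by lia;
    replace (INR 4) with 4 in * by (simpl; ring);
    replace (INR 5) with 5 in * by (simpl; ring).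
  - split; [lra |].
    apply (absa_pow4_lt_half_of_lt_eta4 etak x Hetak); lra.
  - assert (absa x ^ 2 < 1 / 2) by (apply absa_sqr_lt_half; lra).
    split; [lra | nra].
Qed.

Theorem lemma4p4 (k : nat) (etak etak1 eta : R) (j : nat) :
  (4 <= k)%nat ->
  is_eta_k k etak ->
  is_eta_k (S k) etak1 ->
  etak1 <= eta < etak ->
  (k <= j)%nat ->
  Psi j eta > 0.
Proof.
  intros Hk Hetak Hetak1 Heta Hkj.
  destruct (eta_window k etak etak1 eta ltac:(lia) Hetak Hetak1 Heta) as [Hlo Hhi].
  assert (HK : INR 4 <= INR k) by (apply le_INR; exact Hk).
  replace (INR 4) with 4 in HK by (simpl; ring).
  pose proof PI_RGT_0.
  assert (Hc : 1 / 2 < cos eta) by (apply cos_gt_half; split; nra).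
  assert (Hs : 0 < sin eta) by (apply sin_gt_0; nra).
  destruct (Nat.le_gt_cases j 5) as [Hj5 | Hj6].
  - assert (j = 4%nat \/ j = 5%nat) as [-> | ->] by lia;
      [apply Psi_4_gt0 | apply Psi_5_gt0]; lra.
  - pose proof (absa_bounds eta Hc) as Ha.
    destruct (Nat.le_gt_cases k 5) as [Hk5 | Hk6].
    + apply (Psi_gt0_of_pow_lt_sin j 4); [exact Ha | lia |].
      apply (absa_pow4_lt_sin_of_window k etak); [lia | exact Hetak | lra | exact Hlo].
    + apply (Psi_gt0_of_pow_lt_sin j (k - 2)); [exact Ha | lia |].
      exact (absa_pow_lt_sin_of_window k eta Hk6 Hlo Hhi).
Qed.
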